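(* Let $\omega\colon\mathbf Z_+\to(0,+\infty)$ be a weight which is bounded from below. Then $\mathrm{span}[h_m(\mu,\cdot);\ m\ge0,\ \mu\in\mathbf D]$ is dense in $\mathcal X_\omega$. In particular, for $\omega=\omega_0$ with $\omega_0(n)=(n+1)/\pi$, the set $\{h_m(\mu,\cdot);\ m\ge0,\ \mu\in\mathbf D\}$ spans a dense subspace of $\mathcal X_{\omega_0}$.
   Context: $\mathbf D$ is the open unit disk. $\mathcal X_\omega$ is the Hilbert space of holomorphic functions $f(z)=\sum_{n\ge3}c_nz^n$ on $\mathbf D$ with $\|f\|_\omega^2=\sum_{n\ge3}|c_n|^2/\omega(n)<\infty$ (the quotient of the weighted Bergman space $\mathcal B^2_\omega$ by $\mathrm{span}[1,z,z^2]$). For $\mu\in\mathbf C$ and $m\ge1$, $h_m(\mu,z)=\sum_{n\ge0}\mu^n(z^{(6m+4)2^n}-z^{(2m+1)2^n})$, and $h_0(\mu,z)=\sum_{n\ge0}\mu^nz^{2^{n+2}}$; when $\omega$ is bounded from below these belong to $\mathcal X_\omega$ for $\mu\in\mathbf D$. *)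

From HB Require Import structures.
From mathcomp Require Import all_boot all_order all_algebra.
From mathcomp Require Import all_classical all_reals all_analysis.
From mathcomp Require Import complex.
Set Implicit Arguments. Unset Strict Implicit. Unset Printing Implicit Defensive.
Import Order.TTheory GRing.Theory Num.Theory.
Import numFieldNormedType.Exports.
Local Open Scope ring_scope.
Local Open Scope complex_scope.
Notation normc := ComplexField.Normc.normc.

(* Holomorphic functions on D are represented by their Taylor coefficient
   sequences c : nat -> R[i]  (f(z) = sum_n c n z^n). *)

(* Coefficient at index k of the lacunary series  sum_{n>=0} mu^n z^(a 2^n)  (a >= 1). *)
Definition lac_coef (R : rcfType) (a : nat) (mu : R[i]) (k : nat) : R[i] :=
  \sum_(n < k.+1 | (a * 2 ^ n)%N == k) mu ^+ n.

(* Taylor coefficients of h_m(mu, .) :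
   h_0(mu,z) = sum_n mu^n z^(2^(n+2)),
   h_m(mu,z) = sum_n mu^n (z^((6m+4)2^n) - z^((2m+1)2^n))  for m >= 1. *)
Definition h_coef (R : rcfType) (m : nat) (mu : R[i]) (k : nat) : R[i] :=
  if m is 0 then lac_coef 4 mu k
  else lac_coef (6 * m + 4) mu k - lac_coef (2 * m + 1) mu k.

Definition wnorm2 (R : realType) (omega : nat -> R) (c : nat -> R[i]) : \bar R :=
  (\sum_(0 <= n <oo) ((normc (c n) ^+ 2 / omega n)%:E))%E.

(* f belongs to X_omega: f is holomorphic on the unit disk (its Taylor series
   converges absolutely on D), c_0 = c_1 = c_2 = 0, and ||f||_omega < oo. *)
Definition in_X (R : realType) (omega : nat -> R) (c : nat -> R[i]) : Prop :=
  [/\ (forall r : R, 0 <= r < 1 -> cvgn (series (fun n => (normc (c n) * r ^+ n : R)))),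
      (forall n, (n < 3)%N -> c n = 0)
    & (wnorm2 omega c < +oo)%E].

Definition in_span_h (R : realType) (g : nat -> R[i]) : Prop :=
  exists (N : nat) (a : 'I_N -> R[i]) (m : 'I_N -> nat) (mu : 'I_N -> R[i]),
    (forall i, normc (mu i) < 1) /\
    forall k, g k = \sum_(i < N) a i * h_coef (m i) (mu i) k.

Definition span_h_dense (R : realType) (omega : nat -> R) : Prop :=
  forall f : nat -> R[i], in_X omega f ->
  forall eps : R, 0 < eps ->
  exists g : nat -> R[i], in_span_h g /\ (wnorm2 omega (fun k => (f k - g k)%R) < eps%:E)%E.

Definition weight_bdd_below (R : realType) (omega : nat -> R) : Prop :=
  (forall n, 0 < omega n) /\ exists delta : R, 0 < delta /\ forall n, delta <= omega n.

From Pilot Require Import Defs.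
From HB Require Import structures.
From mathcomp Require Import all_boot all_order all_algebra.
From mathcomp Require Import all_classical all_reals all_analysis.
From mathcomp Require Import complex.
From mathcomp Require Import ring lra.
Import Order.TTheory GRing.Theory Num.Theory.
Import numFieldNormedType.Exports.
Local Open Scope ring_scope.
Local Open Scope complex_scope.

(* Let A be the closure of span[h_m(mu, .)] in X_omega, and e_k the k-th unit
   sequence.  For real mu = t -> 0, h_0(t, .) = sum_j t^j e_(4 2^j) and
   h_m(t, .) = sum_j t^j (e_((6m+4) 2^j) - e_((2m+1) 2^j)); since omega >= delta,
   the lacunary remainders after order n are O(t^(n+1)) in norm, so every Taylor
   coefficient lies in A.  These coefficients say e_k - e_(hnext k) is in A for
   all k >= 3, where hnext k = 3k + 2^(v_2 k), hence e_k - e_(hnext^j k) is in A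
   for all j.  Averaging over j < L puts e_k at squared distance at most
   1/(delta L) from A (the hnext^j k are distinct, so their unit vectors are
   orthogonal), hence e_k is in A.
   Finally each f in X_omega is the limit of its Taylor truncations, which only
   involve e_k with k >= 3. *)

Section SpanH.
Variable R : realType.
Local Notation C := R[i].

Lemma span_h0 : in_span_h (0 : nat -> C).
Proof.
exists 0%N, (fun=> 0), (fun=> 0%N), (fun=> 0); split=> [[]//|k].
by rewrite big_ord0.
Qed.

Lemma span_h_gen (m : nat) (mu : C) : normc mu < 1 -> in_span_h (h_coef m mu).
Proof.
move=> mu_lt1; exists 1%N, (fun=> 1), (fun=> m), (fun=> mu); split=> // k.
by rewrite big_ord1 mul1r.
Qed.

Lemma span_hD (g h : nat -> C) : in_span_h g -> in_span_h h -> in_span_h (g + h).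
Proof.
move=> [N [a [m [mu [mu_lt1 gE]]]]] [M [b [m' [mu' [mu'_lt1 hE]]]]].
pose pick T (u : 'I_N -> T) (v : 'I_M -> T) i :=
  match fintype.split i with inl j => u j | inr j => v j end.
exists (N + M)%N, (pick _ a b), (pick _ m m'), (pick _ mu mu'); split.
  by move=> i; rewrite /pick; case: (fintype.split i).
move=> k; rewrite addrfctE gE hE big_split_ord /pick.
congr (_ + _); apply: eq_bigr => i _.
  by rewrite (unsplitK (inl i : 'I_N + 'I_M)).
by rewrite (unsplitK (inr i : 'I_N + 'I_M)).
Qed.

Lemma span_hZ (c : C) (g : nat -> C) : in_span_h g -> in_span_h (cst c * g).
Proof.
move=> [N [a [m [mu [mu_lt1 gE]]]]].
exists N, (fun i => c * a i), m, mu; split=> // k.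
by rewrite mulrfctE gE mulr_sumr; apply: eq_bigr => i _; rewrite mulrA.
Qed.

End SpanH.

Definition unit_seq {T : pzSemiRingType} (k : nat) : nat -> T :=
  fun n => (n == k)%:R.

Lemma unit_seqC {T : pzSemiRingType} (m n : nat) : unit_seq m n = unit_seq n m :> T.
Proof. by rewrite /unit_seq eq_sym. Qed.

Lemma sum_unit_seq {T : pzSemiRingType} (F : nat -> T) (K n : nat) :
  \sum_(i < K) F i * unit_seq i n = if (n < K)%N then F n else 0.
Proof.
rewrite -(big_ord1_eq +%R F n K) [RHS]big_mkcond; apply: eq_bigr => i _.
by rewrite /unit_seq eq_sym; case: eqP; rewrite ?mulr1 ?mulr0.
Qed.

Lemma lac_coefE {R : rcfType} (a : nat) (mu : R[i]) (k M : nat) :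
  (0 < a)%N -> (k < M)%N ->
  lac_coef a mu k = \sum_(i < M) mu ^+ i * unit_seq (a * 2 ^ i) k.
Proof.
move=> a_gt0 kM; rewrite /lac_coef.
rewrite (big_ord_widen_cond M (fun n => a * 2 ^ n == k)%N (fun n => mu ^+ n)) //.
rewrite big_mkcond /=; apply: eq_bigr => i _; rewrite /unit_seq [(k == _)]eq_sym.
case: eqP => [<-|_]; last by rewrite mulr0.
have i_le : (i <= a * 2 ^ i)%N.
  exact: leq_trans (ltnW (ltn_expl i (ltnSn 1))) (leq_pmull _ a_gt0).
by rewrite ltnS i_le mulr1.
Qed.

Lemma sum_expr_le {R : realFieldType} (r : R) (n : nat) : 0 <= r < 1 ->
  \sum_(i < n) r ^+ i <= (1 - r)^-1.
Proof.
case/andP=> r_ge0 r_lt1; rewrite -[_^-1]mul1r ler_pdivlMr ?subr_gt0 //.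
rewrite mulrC -opprB mulNr -subrX1 opprB lerBlDr lerDl.
exact: exprn_ge0.
Qed.

Lemma normc_sum_unit_seq {R : rcfType} (f : nat -> nat) (c : nat -> R[i])
    (M k : nat) : injective f ->
  normc (\sum_(i < M) c i * unit_seq (f i) k) ^+ 2 =
  \sum_(i < M) normc (c i) ^+ 2 * unit_seq (f i) k.
Proof.
move=> f_inj; case: (pickP (fun i : 'I_M => k == f i)) => [i0 /eqP k_eq | none].
  have uE (T : pzSemiRingType) (i : 'I_M) : unit_seq (f i) k = unit_seq i i0 :> T.
    by rewrite /unit_seq k_eq (inj_eq f_inj).
  rewrite (eq_bigr (fun i : 'I_M => c i * unit_seq i i0)) => [|i _]; last by rewrite uE.
  rewrite [RHS](eq_bigr (fun i : 'I_M => normc (c i) ^+ 2 * unit_seq i i0)) => [|i _].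
    by rewrite sum_unit_seq (sum_unit_seq (fun i => normc (c i) ^+ 2)) ltn_ord.
  by rewrite uE.
have u0 (T : pzSemiRingType) (i : 'I_M) : unit_seq (f i) k = 0 :> T.
  by rewrite /unit_seq none.
rewrite !big1 => [|i _|i _]; rewrite ?u0 ?mulr0 //.
by rewrite ComplexField.Normc.normc0 expr0n.
Qed.

Lemma normc_real {R : rcfType} (r : R) : normc r%:C = `|r|.
Proof. by rewrite /= expr0n /= addr0 sqrtr_sqr. Qed.

Lemma normc_sqrD_le {R : rcfType} (y z : R[i]) :
  normc (y + z) ^+ 2 <= 2 * normc y ^+ 2 + 2 * normc z ^+ 2.
Proof.
have y_ge0 : 0 <= normc y by case: y => *; exact: sqrtr_ge0.
have z_ge0 : 0 <= normc z by case: z => *; exact: sqrtr_ge0.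
have yz_ge0 : 0 <= normc (y + z) by case: (y + z) => *; exact: sqrtr_ge0.
have := le_normcD y z; have := sqr_ge0 (normc y - normc z); nra.
Qed.

(* For k = (2m+1) 2^v with m >= 1, hnext k = (6m+4) 2^v, so e_k - e_(hnext k) is
   minus a Taylor coefficient (in mu) of h_m; for k = 2^v, hnext k = 4 2^v and
   both e_k and e_(hnext k) are Taylor coefficients of h_0. *)
Definition hnext (k : nat) : nat := 3 * k + 2 ^ logn 2 k.

Lemma hnext_gt k : (k < hnext k)%N.
Proof. by rewrite /hnext -addn1 leq_add ?leq_pmull ?expn_gt0. Qed.

Lemma iter_hnext_ge k j : (k <= iter j hnext k)%N.
Proof.
by elim: j => // j IHj; rewrite iterS (leq_trans IHj) // ltnW ?hnext_gt.
Qed.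

Lemma iter_hnext_inj k : injective (fun j => iter j hnext k).
Proof.
by apply: incn_inj; apply: Order.NatMonotonyTheory.incnP => j; exact: hnext_gt.
Qed.

Section WeightedNorm.
Variables (R : realType) (omega : nat -> R).
Hypothesis omega_gt0 : forall n, 0 < omega n.
Local Notation C := R[i].
Local Notation wnorm2 := (wnorm2 omega).
Implicit Types x y g h : nat -> C.

Let wterm_ge0 x n : 0 <= normc (x n) ^+ 2 / omega n.
Proof. by rewrite divr_ge0 ?sqr_ge0 ?ltW. Qed.



Lemma wnorm2_0 : wnorm2 0 = 0%E.
Proof.
apply: eseries0 => n _ _.
by rewrite [0 n]/(0 : C) ComplexField.Normc.normc0 expr0n mul0r.
Qed.

Lemma wnorm2Z c x : wnorm2 (cst c * x) = ((normc c ^+ 2)%:E * wnorm2 x)%E.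
Proof.
rewrite -nneseriesZl => [|n _]; last by rewrite lee_fin wterm_ge0.
apply: eq_eseriesr => n _.
by rewrite -EFinM [(_ * x) n]/(c * x n) ComplexField.Normc.normcM exprMn -mulrA.
Qed.

Lemma wnorm2N x : wnorm2 (- x) = wnorm2 x.
Proof.
by apply: eq_eseriesr => n _; rewrite [(- x) n]/(- x n) normcN.
Qed.

Lemma wnorm2D_le x y : (wnorm2 (x + y)%R <= 2%:E * wnorm2 x + 2%:E * wnorm2 y)%E.
Proof.
rewrite -!nneseriesZl => [|n _|n _]; try by rewrite lee_fin wterm_ge0.
rewrite -nneseriesD => [|n _ _|n _ _]; try by rewrite lee_fin mulr_ge0 ?wterm_ge0.
apply: lee_nneseries => n _; first by rewrite lee_fin wterm_ge0.
rewrite -!EFinM -EFinD lee_fin !(mulrA 2 (_ ^+ 2)) -mulrDl.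
by apply: ler_wpM2r; [rewrite invr_ge0 ltW | exact: normc_sqrD_le].
Qed.

Lemma wnorm2D_lt {x y} {a b : R} : (wnorm2 x < a%:E)%E -> (wnorm2 y < b%:E)%E ->
  (wnorm2 (x + y)%R < (2 * a + 2 * b)%:E)%E.
Proof.
move=> xa yb; apply: le_lt_trans (wnorm2D_le x y) _.
by rewrite (EFinD (2 * a)) !(EFinM 2) lteD // lte_pmul2l.
Qed.

Lemma wnorm2_le x (B : R) :
  (forall N, \sum_(n < N) normc (x n) ^+ 2 / omega n <= B) -> (wnorm2 x <= B%:E)%E.
Proof.
move=> xB; apply: lime_le.
  by apply: is_cvg_nneseries => n _ _; rewrite lee_fin wterm_ge0.
by apply: nearW => N; rewrite sumEFin lee_fin big_mkord.
Qed.


Definition in_closure_span_h x : Prop :=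
  forall e : R, 0 < e -> exists g, in_span_h g /\ (wnorm2 (x - g)%R < e%:E)%E.

Lemma closure_span_h g : in_span_h g -> in_closure_span_h g.
Proof.
by move=> gS e e_gt0; exists g; split; rewrite // subrr wnorm2_0 lte_fin.
Qed.

Lemma closure_approx x :
  (forall e : R, 0 < e -> exists y, in_closure_span_h y /\ (wnorm2 (x - y)%R < e%:E)%E) ->
  in_closure_span_h x.
Proof.
move=> x_approx e e_gt0.
have e4_gt0 : 0 < e / 4 by rewrite divr_gt0.
have [y [yC xy]] := x_approx _ e4_gt0.
have [g [gS yg]] := yC _ e4_gt0.
exists g; split => //.
have -> : x - g = (x - y) + (y - g) by rewrite addrA subrK.
apply: lt_le_trans (wnorm2D_lt xy yg) _.
by rewrite lee_fin; lra.
Qed.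

Lemma closureD {x y} : in_closure_span_h x -> in_closure_span_h y ->
  in_closure_span_h (x + y).
Proof.
move=> xC yC e e_gt0.
have e4_gt0 : 0 < e / 4 by rewrite divr_gt0.
have [g [gS xg]] := xC _ e4_gt0; have [h [hS yh]] := yC _ e4_gt0.
exists (g + h); split; first exact: span_hD.
rewrite opprD addrACA; apply: lt_le_trans (wnorm2D_lt xg yh) _.
by rewrite lee_fin; lra.
Qed.

Lemma closureZ c {x} : in_closure_span_h x -> in_closure_span_h (cst c * x).
Proof.
move=> xC e e_gt0.
have c2_ge0 : 0 <= normc c ^+ 2 by exact: sqr_ge0.
have [g [gS xg]] := xC (e / (normc c ^+ 2 + 1)) (divr_gt0 e_gt0 (ltr_wpDl c2_ge0 ltr01)).
exists (cst c * g); split; first exact: span_hZ.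
rewrite -mulrBr wnorm2Z; apply: le_lt_trans (lee_wpmul2l _ (ltW xg)) _.
  by rewrite lee_fin.
rewrite -EFinM lte_fin mulrA ltr_pdivrMr ?ltr_wpDl //; nra.
Qed.

Lemma closureN {x} : in_closure_span_h x -> in_closure_span_h (- x).
Proof.
move=> /(closureZ (-1)); congr in_closure_span_h.
by apply/funext => k; rewrite !fctE mulN1r.
Qed.

Lemma closureB {x y} : in_closure_span_h x -> in_closure_span_h y ->
  in_closure_span_h (x - y).
Proof. by move=> xC /closureN; exact: closureD. Qed.

Lemma closure_sum n (F : nat -> nat -> C) :
  (forall j, (j < n)%N -> in_closure_span_h (F j)) ->
  in_closure_span_h (\sum_(j < n) F j).
Proof.
elim: n => [|n IHn] FC; first by rewrite big_ord0; exact/closure_span_h/span_h0.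
rewrite big_ord_recr /=; apply: closureD; last exact: FC.
by apply: IHn => j /ltnW; exact: FC.
Qed.

(* X n is recovered as the limit, as t -> 0, of t^-n (Y t - sum_(j < n) t^j X j). *)
Lemma closure_expansion_coef (Y : R -> nat -> C) (X : nat -> nat -> C) (K : R) :
  (forall t, 0 < t <= 2^-1 -> in_closure_span_h (Y t)) ->
  (forall n t, 0 < t <= 2^-1 ->
    (wnorm2 (cst (t%:C ^- n) * (Y t - \sum_(j < n.+1) cst (t%:C ^+ j) * X j))%R
      <= (K * t)%:E)%E) ->
  forall n, in_closure_span_h (X n).
Proof.
move=> YC remainder_le; elim/ltn_ind => n IHn.
apply: closure_approx => e e_gt0.
have K1_gt0 : 0 < `|K| + 1 by rewrite ltr_wpDl.
pose t := Num.min 2^-1 (e / (`|K| + 1)).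
have t_gt0 : 0 < t by rewrite lt_min invr_gt0 ltr0n divr_gt0.
have t_range : 0 < t <= 2^-1 by rewrite t_gt0 ge_min lexx.
have tn_neq0 : t%:C ^+ n != 0 by rewrite expf_neq0 // fmorph_eq0 gt_eqF.
exists (cst (t%:C ^- n) * (Y t - \sum_(j < n) cst (t%:C ^+ j) * X j)); split.
  have sumC : in_closure_span_h (\sum_(j < n) cst (t%:C ^+ j) * X j).
    apply: (closure_sum n (fun j => cst (t%:C ^+ j) * X j)) => j jn.
    exact/closureZ/IHn.
  exact/closureZ/(closureB (YC t t_range) sumC).
have -> : X n - cst (t%:C ^- n) * (Y t - \sum_(j < n) cst (t%:C ^+ j) * X j) =
    - (cst (t%:C ^- n) * (Y t - \sum_(j < n.+1) cst (t%:C ^+ j) * X j)).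
  apply/funext => k; rewrite big_ord_recr /= !fct_sumE !fctE.
  by field.
rewrite wnorm2N; apply: le_lt_trans (remainder_le n t t_range) _.
have Kt_lt : `|K| * t < e.
  have t_le : t <= e / (`|K| + 1) by rewrite ge_min lexx orbT.
  apply: le_lt_trans (ler_wpM2l (normr_ge0 K) t_le) _.
  by rewrite mulrA ltr_pdivrMr //; nra.
by rewrite lte_fin; apply: le_lt_trans _ Kt_lt; rewrite ler_pM2r // ler_norm.
Qed.

Section BoundedBelow.
Variable delta : R.
Hypothesis delta_gt0 : 0 < delta.
Hypothesis delta_le : forall n, delta <= omega n.

Lemma wnorm2_sum_unit_le (f : nat -> nat) (c : nat -> C) (B : R) x : injective f ->
  (forall N, exists2 M, \sum_(i < M) normc (c i) ^+ 2 <= B &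
     forall k, (k < N)%N -> x k = \sum_(i < M) c i * unit_seq (f i) k) ->
  (wnorm2 x <= (delta^-1 * B)%:E)%E.
Proof.
move=> f_inj x_comb; apply: wnorm2_le => N; have [M cB xE] := x_comb N.
have idelta_ge0 : 0 <= delta^-1 by rewrite invr_ge0 ltW.
have unit_mass i : \sum_(k < N) unit_seq (f i) k <= 1 :> R.
  rewrite (eq_bigr (fun k : 'I_N => 1 * unit_seq k (f i))) => [|k _].
    by rewrite (sum_unit_seq (fun=> 1)); case: ifP.
  by rewrite mul1r unit_seqC.
apply: (@le_trans _ _
    (\sum_(k < N) \sum_(i < M) delta^-1 * (normc (c i) ^+ 2 * unit_seq (f i) k))).
  apply: ler_sum => k _; rewrite xE // normc_sum_unit_seq // mulr_suml.
  apply: ler_sum => i _; rewrite mulrC; apply: ler_wpM2r.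
    by apply: mulr_ge0; [exact: sqr_ge0 | exact: ler0n].
  by rewrite lef_pV2 ?posrE.
rewrite exchange_big /=; under eq_bigr do rewrite -mulr_sumr.
rewrite -mulr_sumr ler_wpM2l //; apply: le_trans cB; apply: ler_sum => i _.
by rewrite -mulr_sumr ler_piMr ?sqr_ge0.
Qed.

Lemma wnorm2_lac_remainder_le (a n : nat) (t : R) : (0 < a)%N -> 0 < t <= 2^-1 ->
  (wnorm2 (cst (t%:C ^- n) *
     (lac_coef a t%:C - \sum_(j < n.+1) cst (t%:C ^+ j) * unit_seq (a * 2 ^ j)))%R
    <= (delta^-1 * t)%:E)%E.
Proof.
move=> a_gt0 /andP[t_gt0 t_le].
have tC_neq0 : t%:C != 0 by rewrite fmorph_eq0 gt_eqF.
apply: (@wnorm2_sum_unit_le (fun i => a * 2 ^ (n.+1 + i))%N (fun i => t%:C ^+ i.+1)).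
  by move=> i j /eqP; rewrite eqn_pmul2l // eqn_exp2l // eqn_add2l => /eqP.
move=> N; exists N.
  have t2_range : 0 <= t ^+ 2 < 1.
    by rewrite sqr_ge0 /= expr2; nra.
  rewrite (eq_bigr (fun i : 'I_N => t ^+ 2 * (t ^+ 2) ^+ i)) => [|i _]; last first.
    by rewrite -rmorphXn normc_real ger0_norm ?exprn_ge0 ?ltW // -exprS -!exprM mulnC.
  rewrite -mulr_sumr.
  apply: le_trans (ler_wpM2l (sqr_ge0 t) (sum_expr_le _ N t2_range)) _.
  have t2_lt1 : t ^+ 2 < 1 by case/andP: t2_range.
  by rewrite ler_pdivrMr ?subr_gt0 // expr2; nra.
move=> k kN; rewrite !fctE fct_sumE (lac_coefE _ _ _ (n.+1 + N)) ?ltn_addl //.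
rewrite big_split_ord /= [X in X - _]addrC addrK mulr_sumr.
by apply: eq_bigr => i _; rewrite mulrA addSnnS exprD mulKf ?expf_neq0.
Qed.

Let normc_lt1 (t : R) : 0 < t <= 2^-1 -> normc t%:C < 1.
Proof.
case/andP=> t_gt0 t_le; rewrite normc_real ger0_norm ?ltW //.
by apply: le_lt_trans t_le _; lra.
Qed.

Lemma closure_unit_pow2 j : in_closure_span_h (unit_seq (4 * 2 ^ j)).
Proof.
move: j; apply: (@closure_expansion_coef (fun t => h_coef 0 t%:C) _ delta^-1).
  by move=> t /normc_lt1 t_lt1; exact/closure_span_h/span_h_gen.
by move=> n t; exact: wnorm2_lac_remainder_le.
Qed.

Lemma closure_unit_odd p j : (0 < p)%N ->
  in_closure_span_h (unit_seq ((6 * p + 4) * 2 ^ j) - unit_seq ((2 * p + 1) * 2 ^ j)).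
Proof.
case: p => [//|p] _; move: j.
apply: (@closure_expansion_coef (fun t => h_coef p.+1 t%:C) _ (4 * delta^-1)).
  by move=> t /normc_lt1 t_lt1; exact/closure_span_h/span_h_gen.
move=> n t t_range; set a := (6 * p.+1 + 4)%N; set b := (2 * p.+1 + 1)%N.
pose rem (c : nat) : nat -> C := cst (t%:C ^- n) *
  (lac_coef c t%:C - \sum_(j < n.+1) cst (t%:C ^+ j) * unit_seq (c * 2 ^ j)).
have -> : cst (t%:C ^- n) * (h_coef p.+1 t%:C -
    \sum_(j < n.+1) cst (t%:C ^+ j) * (unit_seq (a * 2 ^ j) - unit_seq (b * 2 ^ j))) =
    rem a - rem b.
  apply/funext => k; rewrite /rem !fctE !fct_sumE /=.
  under eq_bigr do rewrite !fctE mulrBr.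
  by rewrite sumrB; ring.
apply: le_trans (wnorm2D_le _ _) _; rewrite wnorm2N.
have rem_le c : (0 < c)%N -> (wnorm2 (rem c) <= (delta^-1 * t)%:E)%E.
  by move=> c_gt0; exact: wnorm2_lac_remainder_le.
apply: le_trans (leeD (lee_wpmul2l _ (rem_le a _)) (lee_wpmul2l _ (rem_le b _))) _
  => //.
by rewrite -!EFinM -EFinD lee_fin le_eqVlt; apply/orP; left; apply/eqP; ring.
Qed.

(* x - L^-1 sum_(j < L) (x - e_(f j)) is an average of L distinct unit vectors,
   of squared norm at most 1 / (delta L). *)
Lemma closure_of_unit_diffs {x} {f : nat -> nat} : injective f ->
  (forall j, in_closure_span_h (x - unit_seq (f j))) -> in_closure_span_h x.
Proof.
move=> f_inj diffC; apply: closure_approx => e e_gt0.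
have ratio_ge0 : 0 <= delta^-1 / e by rewrite divr_ge0 ?invr_ge0 ?ltW.
pose L := Num.bound (delta^-1 / e).
have L_gt : delta^-1 / e < L%:R := archi_boundP ratio_ge0.
have L_gt0 : (0 : R) < L%:R by apply: le_lt_trans L_gt.
have LC_neq0 : (L%:R : C) != 0 by rewrite pnatr_eq0 -lt0n -(ltr0n R).
exists (cst L%:R^-1 * \sum_(j < L) (x - unit_seq (f j))); split.
  by apply/closureZ/(closure_sum L (fun j => x - unit_seq (f j))) => j _.
have -> : x - cst L%:R^-1 * \sum_(j < L) (x - unit_seq (f j)) =
    cst L%:R^-1 * \sum_(j < L) unit_seq (f j).
  apply/funext => k; rewrite !fctE !fct_sumE sumrB sumr_const card_ord.
  by field.
apply: le_lt_trans (@wnorm2_sum_unit_le f (fun=> L%:R^-1) L%:R^-1 _ f_inj _) _.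
  move=> N; exists L; last by move=> k _; rewrite !fctE fct_sumE mulr_sumr.
  have -> : (L%:R : C) = (L%:R : R)%:C by rewrite rmorph_nat.
  rewrite sumr_const card_ord ComplexField.Normc.normcV normc_real ger0_norm ?ler0n //.
  by rewrite -[X in X <= _]mulr_natr expr2 -mulrA mulVf ?mulr1 // gt_eqF.
by rewrite lte_fin ltr_pdivrMr // mulrC -ltr_pdivrMr.
Qed.

Lemma closure_unit_sub_hnext k : (3 <= k)%N ->
  in_closure_span_h (unit_seq k - unit_seq (hnext k)).
Proof.
move=> k_ge3; have k_gt0 : (0 < k)%N by apply: leq_trans k_ge3.
have [m m_odd kE] := pfactor_coprime (isT : prime 2) k_gt0.
rewrite coprime2n in m_odd; rewrite /hnext; set v := logn 2 k in kE *.
have -> : (3 * k + 2 ^ v = (3 * m + 1) * 2 ^ v)%N by rewrite {1}kE mulnDl mul1n mulnA.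
rewrite {1}kE; have mE : m = (2 * m./2 + 1)%N.
  by rewrite -[m in LHS]odd_double_half m_odd addnC -mul2n.
move: kE; rewrite mE; case: m./2 => [|p] kE.
  have v_ge2 : (2 <= v)%N.
    rewrite -(ltn_exp2l 1 v (isT : 1 < 2)%N).
    by move: k_ge3; rewrite kE muln0 add0n mul1n.
  have pow2E : (2 ^ v = 4 * 2 ^ (v - 2))%N by rewrite -[4%N]/(2 ^ 2)%N -expnD subnKC.
  rewrite {1}muln0 add0n mul1n {1}pow2E (_ : 3 * (2 * 0 + 1) + 1 = 4)%N //.
  exact: closureB (closure_unit_pow2 (v - 2)) (closure_unit_pow2 v).
have -> : (3 * (2 * p.+1 + 1) + 1 = 6 * p.+1 + 4)%N by rewrite mulnDr mulnA -addnA.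
by rewrite -opprB; exact/closureN/closure_unit_odd.
Qed.

Lemma closure_unit k : (3 <= k)%N -> in_closure_span_h (unit_seq k).
Proof.
move=> k_ge3; apply: (closure_of_unit_diffs (iter_hnext_inj k)).
elim=> [|j IHj]; first by rewrite subrr; exact/closure_span_h/span_h0.
rewrite iterS -[unit_seq k](subrK (unit_seq (iter j hnext k))) -addrA.
apply: closureD IHj _; apply: closure_unit_sub_hnext.
exact: leq_trans k_ge3 (iter_hnext_ge k j).
Qed.

Lemma closure_in_X f : in_X omega f -> in_closure_span_h f.
Proof.
case=> _ f012 f_fin; apply: closure_approx => e e_gt0.
have f_terms_ge0 n : true -> (0 <= (normc (f n) ^+ 2 / omega n)%:E)%E.
  by rewrite lee_fin wterm_ge0.
have [K _ tailK] :=
  nneseries_tail_cvg f_fin f_terms_ge0 (@nbhs_open_ereal_lt R 0 (fun=> e) e_gt0).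
exists (\sum_(i < K) cst (f i) * unit_seq i); split.
  apply: (closure_sum K (fun i => cst (f i) * unit_seq i)) => i _.
  have [i_lt3|i_ge3] := ltnP i 3; last exact/closureZ/closure_unit.
  have -> : cst (f i) * unit_seq i = 0 by apply/funext => k; rewrite !fctE f012 ?mul0r.
  exact/closure_span_h/span_h0.
rewrite /Defs.wnorm2 (nneseries_split 0 K) => [|n _]; last by rewrite lee_fin wterm_ge0.
rewrite add0n big_nat_cond big1 ?add0e => [|n /andP[/andP[_ nK] _]].
  apply: le_lt_trans (tailK K (leqnn K)).
  rewrite eseries_cond [X in (_ <= X)%E]eseries_cond.
  apply: lee_nneseries => [n _ _|n /andP[_ Kn]]; first by rewrite lee_fin wterm_ge0.
  by rewrite !fctE fct_sumE sum_unit_seq ltnNge Kn subr0.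
by rewrite !fctE fct_sumE sum_unit_seq nK subrr ComplexField.Normc.normc0 expr0n mul0r.
Qed.

End BoundedBelow.

End WeightedNorm.

Theorem theorem2p4 (R : realType) :
  (forall omega : nat -> R, weight_bdd_below omega -> span_h_dense omega) /\
  span_h_dense (fun n : nat => n.+1%:R / (pi : R)).
Proof.
have dense omega : weight_bdd_below omega -> span_h_dense omega.
  case=> omega_gt0 [delta [delta_gt0 delta_le]].
  exact: closure_in_X _ _ omega_gt0 _ delta_gt0 delta_le.
split=> //; apply: dense; split=> [n|]; first by rewrite divr_gt0 ?pi_gt0.
exists pi^-1; split=> [|n]; first by rewrite invr_gt0 pi_gt0.
by rewrite mulrC ler_peMr ?ler1n // invr_ge0 ltW // pi_gt0.
Qed.
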